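(* Let $\mathbb{H}$ be a real Hilbert space, $\mathbf{x}$ a random vector in $\mathbb{H}$ with $\mathbb{E}[\|\mathbf{x}\|^2]<\infty$, and $\mathcal{S}\boldsymbol{\theta}=\mathbb{E}[\langle\boldsymbol{\theta},\mathbf{x}\rangle\mathbf{x}]$. Assume $\mathcal{S}$ has an orthonormal basis $(\mathbf{e}_i)$ of eigenvectors with eigenvalues $0<\lambda_i<\tfrac12$. Let $\gamma\in(0,1)$ and $\mathcal{T}=\mathrm{Id}-\gamma\mathcal{S}$. Let $(t_n)_{n\ge1}$ be positive with $\sum_n\frac{1}{nt_n}<\infty$, let $\boldsymbol{\theta}\in\mathbb{H}$ and $0\le\kappa<\beta$. If $\|\mathcal{T}^n\boldsymbol{\theta}\|_\kappa^2\le\frac{1}{n^{\beta-\kappa}t_n}$ for all $n\ge1$, then $\|\boldsymbol{\theta}\|_\beta^2<\infty$.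
   Context: For $\boldsymbol{\theta}=\sum_i\theta_i\mathbf{e}_i$ and $\beta\in\mathbb{R}$, $\|\boldsymbol{\theta}\|_\beta^2:=\sum_i\lambda_i^{-\beta}\theta_i^2\in[0,\infty]$. *)

From HB Require Import structures.
From mathcomp Require Import all_boot all_order all_algebra.
From mathcomp Require Import all_classical all_reals all_analysis.
Set Implicit Arguments. Unset Strict Implicit. Unset Printing Implicit Defensive.
Import Order.TTheory GRing.Theory Num.Theory.
Import numFieldNormedType.Exports.
Local Open Scope ring_scope.
Local Open Scope classical_set_scope.

Definition is_inner_product (R : realType) (H : normedModType R)
  (ip : H -> H -> R) : Prop :=
  [/\ (forall u v, ip u v = ip v u),
      (forall (a : R) u v w, ip (a *: u + v) w = a * ip u w + ip v w) &
      (forall u, ip u u = `|u| ^+ 2)].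

Definition is_ONB (R : realType) (H : normedModType R) (ip : H -> H -> R)
  (I : choiceType) (e : I -> H) : Prop :=
  (forall i j, ip (e i) (e j) = if i == j then 1 else 0) /\
  (forall v, (forall i, ip v (e i) = 0) -> v = 0).

Definition wnorm2 (R : realType) (H : normedModType R) (ip : H -> H -> R)
  (I : choiceType) (e : I -> H) (lam : I -> R) (beta : R) (v : H) : \bar R :=
  \esum_(i in [set: I]) ((lam i `^ (- beta)) * (ip v (e i)) ^+ 2)%:E.

Definition random_vector (R : realType) (H : normedModType R)
  (ip : H -> H -> R) (d : measure_display) (Omega : measurableType d)
  (x : Omega -> H) : Prop :=
  (forall th, measurable_fun [set: Omega] (fun w => ip th (x w))) /\
  measurable_fun [set: Omega] (fun w => `|x w|).

(* S th = E[<th, x> x], i.e. (the Hilbert-valued expectation being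
   characterized weakly) <S th, ph> = E[<th,x><ph,x>] for all ph. *)
Definition is_second_moment_op (R : realType) (H : normedModType R)
  (ip : H -> H -> R) (d : measure_display) (Omega : measurableType d)
  (P : probability Omega R) (x : Omega -> H) (S : H -> H) : Prop :=
  forall th ph,
    (\int[P]_w ((ip th (x w) * ip ph (x w))%:E) = (ip (S th) ph)%:E)%E.

From HB Require Import structures.
From mathcomp Require Import all_boot all_order all_algebra.
From mathcomp Require Import all_classical all_reals all_analysis.
From mathcomp Require Import ring lra zify.
Set Implicit Arguments.
Unset Strict Implicit.
Unset Printing Implicit Defensive.
Import Order.TTheory GRing.Theory Num.Theory.
Import numFieldNormedType.Exports.
Local Open Scope ring_scope.
Local Open Scope classical_set_scope.

(* Write c_i = <theta, e_i> and x_i = gamma lambda_i, so that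
   <T^n theta, e_i> = (1 - x_i)^n c_i.  On the window m_i <= n <= 2 m_i with
   m_i = floor (1 / x_i), the factor (1 - x_i)^(2n) stays above e^(-8) while
   n^(beta-kappa) / n is at least a constant times lambda_i^(kappa-beta) / (m_i + 1).
   Averaging over the window gives
     lambda_i^(-beta) c_i^2 <= C sum_n n^(beta-kappa-1) lambda_i^(-kappa) <T^n theta, e_i>^2,
   and after summing over i and exchanging the sums the hypothesis bounds the
   right-hand side by C sum_n 1 / (n t_n) < +oo. *)

Lemma ler_sum_nat_widen (R : numDomainType) (F : nat -> R) a b c d :
  (c <= a)%N -> (b <= d)%N -> (forall n, 0 <= F n) ->
  \sum_(a <= n < b) F n <= \sum_(c <= n < d) F n.
Proof.
move=> ca bd F0; have [ab|ba] := leqP a b; last first.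
  by rewrite big_geq ?(ltnW ba) // sumr_ge0.
rewrite (@big_cat_nat _ _ _ a c d) //=; last exact: leq_trans bd.
rewrite (@big_cat_nat _ _ _ b a d) //= addrCA lerDl.
by rewrite addr_ge0 // sumr_ge0.
Qed.

Lemma expR_le_pow_1_sub (R : realType) (x : R) (n : nat) : 0 <= x <= 2^-1 ->
  expR (- (2 * x * n%:R)) <= (1 - x) ^+ n.
Proof.
move=> /andP[x0 x1].
have step : expR (- (2 * x)) <= 1 - x.
  rewrite expRN -div1r ler_pdivrMr ?expR_gt0 //.
  by have := expR_ge1Dx (2 * x); have := expR_gt0 (2 * x); nra.
rewrite -mulNr expRM_natr; apply: lerXn2r => //; rewrite nnegrE ?expR_ge0 //.
lra.
Qed.

Lemma sum_le_fine_nneseries (R : realType) (u : nat -> R) m :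
  (forall n, (m <= n)%N -> 0 <= u n) ->
  (\sum_(m <= n <oo) (u n)%:E < +oo)%E ->
  forall N, \sum_(m <= n < N) u n <= fine (\sum_(m <= n <oo) (u n)%:E).
Proof.
move=> u0 fin N; have ser0 : (0 <= \sum_(m <= n <oo) (u n)%:E)%E.
  by apply: nneseries_ge0 => n mn _; rewrite lee_fin u0.
rewrite -lee_fin fineK ?ge0_fin_numE // -sumEFin.
by apply: nneseries_lim_ge => n mn _; rewrite lee_fin u0.
Qed.

Section window.
Variables (R : realType) (x : R).
Hypothesis x_range : 0 < x <= 2^-1.
Let m := Num.truncn x^-1.

Let x_gt0 : 0 < x. Proof. by case/andP: x_range. Qed.

Lemma window_start_ge1 : (1 <= m)%N.
Proof.
case/andP: x_range => x0 x1; rewrite truncn_ge_nat ?invr_ge0 ?ltW //.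
by rewrite invf_gt1 //; lra.
Qed.

Lemma inv_le_window n : (m <= n)%N -> x^-1 <= 2 * n%:R.
Proof.
move=> mn; have m1 := window_start_ge1.
apply: le_trans (ltW (truncnS_gt x^-1)) _.
by rewrite -natrM ler_nat -/m; lia.
Qed.

Lemma window_pow_ge n : (n <= m.*2)%N -> expR (-4) <= (1 - x) ^+ n.
Proof.
move=> nm; apply: le_trans (expR_le_pow_1_sub _ _); last first.
  by case/andP: x_range => x0 ->; rewrite ltW.
rewrite ler_expR lerN2.
have mx : m%:R * x <= 1.
  by rewrite -ler_pdivlMr // div1r truncn_le invr_ge0 ltW.
have : n%:R <= 2 * m%:R :> R by rewrite -natrM ler_nat -/m; lia.
have := x_gt0; nra.
Qed.

Lemma powRN_le_window (l a : R) n : 0 <= a -> x <= l -> (m <= n)%N ->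
  l `^ (- a) <= 2 `^ a * n%:R `^ a.
Proof.
move=> a0 xl mn; have x0 := x_gt0; have l0 : 0 < l by apply: lt_le_trans xl.
rewrite powRN -powRM ?ler0n // -[X in X <= _]div1r ler_pdivrMr ?powR_gt0 //.
have l2n : 1 <= 2 * n%:R * l.
  have := inv_le_window mn; have : 0 < x^-1 by rewrite invr_gt0.
  rewrite -(mulVf (lt0r_neq0 x0)); nra.
have one_powR : 1 `^ a = 1 :> R by rewrite powR1.
rewrite -powRM ?mulr_ge0 ?ler0n ?(ltW l0) // -[X in X <= _]one_powR.
by rewrite ge0_ler_powR // nnegrE; lra.
Qed.

Lemma powRN_le_window_sum (l a : R) : x <= l -> 0 < a ->
  l `^ (- a) <= \sum_(m <= n < m.*2.+1)
    2 * 2 `^ a * expR 8 * (n%:R `^ a / n%:R) * ((1 - x) ^+ n) ^+ 2.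
Proof.
move=> xl a0; have m1 := window_start_ge1.
have -> : l `^ (- a) = \sum_(m <= n < m.*2.+1) l `^ (- a) / (m.+1)%:R.
  rewrite sumr_const_nat (_ : (m.*2.+1 - m = m.+1)%N); last by lia.
  by rewrite -[RHS]mulr_natr divfK ?pnatr_eq0.
apply: ler_sum_nat => n /andP[mn]; rewrite ltnS => nm.
have n0 : 0 < n%:R :> R by rewrite ltr0n; lia.
have la := powRN_le_window (ltW a0) xl mn.
have lm : (m.+1)%:R^-1 <= 2 / n%:R :> R.
  rewrite -invf_div lef_pV2 ?posrE ?divr_gt0 ?ltr0Sn // ler_pdivrMr //.
  have : n%:R <= 2 * m%:R :> R by rewrite -natrM ler_nat -/m; lia.
  rewrite -natr1; lra.
have exp_ge1 : 1 <= expR 8 * ((1 - x) ^+ n) ^+ 2.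
  have e8 : expR 8 * expR (-4) ^+ 2 = 1 :> R.
    by rewrite -expRM_natr -expRD (_ : 8 + -4 * 2%:R = 0) ?expR0 //; lra.
  have decay := window_pow_ge nm.
  rewrite -{1}e8 ler_wpM2l ?expR_ge0 // lerXn2r // nnegrE ?expR_ge0 //.
  exact: le_trans (expR_ge0 _) decay.
rewrite (_ : 2 * 2 `^ a * expR 8 * (n%:R `^ a / n%:R) * ((1 - x) ^+ n) ^+ 2 =
  2 `^ a * n%:R `^ a * (2 / n%:R) * (expR 8 * ((1 - x) ^+ n) ^+ 2)); last by ring.
rewrite -[X in X <= _]mulr1; apply: ler_pM => //.
  by rewrite mulr_ge0 ?powR_ge0 ?invr_ge0 ?ler0n.
by apply: ler_pM => //; rewrite ?powR_ge0 ?invr_ge0 ?ler0n.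
Qed.

End window.

Section spectral_weights.
Variables (R : realType) (I : choiceType) (lam c : I -> R).
Variables (gamma kappa beta : R) (t : nat -> R).
Hypothesis lam_range : forall i, 0 < lam i < 2^-1.
Hypothesis gamma_range : 0 < gamma < 1.
Hypothesis kappa_lt_beta : kappa < beta.
Hypothesis t_gt0 : forall n, (0 < n)%N -> 0 < t n.

Let a := beta - kappa.
Let C := 2 * 2 `^ a * expR 8.
Let window i := Num.truncn (gamma * lam i)^-1.
Let term n i := C * (n%:R `^ a / n%:R) *
  (lam i `^ (- kappa) * ((1 - gamma * lam i) ^+ n * c i) ^+ 2).

Let a_gt0 : 0 < a. Proof. by rewrite subr_gt0. Qed.
Let C_ge0 : 0 <= C. Proof. by rewrite !mulr_ge0 ?powR_ge0 ?expR_ge0. Qed.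
Let term_ge0 n i : 0 <= term n i.
Proof.
rewrite /term; apply: mulr_ge0; last by rewrite mulr_ge0 ?powR_ge0 ?sqr_ge0.
by rewrite mulr_ge0 ?divr_ge0 ?powR_ge0 ?ler0n.
Qed.

Lemma coord_le_iterate_sum i N : ((window i).*2 <= N)%N ->
  lam i `^ (- beta) * c i ^+ 2 <= \sum_(1 <= n < N.+1) term n i.
Proof.
move=> wN; have /andP[l0 l1] := lam_range i; have /andP[g0 g1] := gamma_range.
have x_range : 0 < gamma * lam i <= 2^-1 by rewrite mulr_gt0 //=; nra.
have w0 : 0 <= lam i `^ (- kappa) * c i ^+ 2 by rewrite mulr_ge0 ?powR_ge0 ?sqr_ge0.
have -> : lam i `^ (- beta) * c i ^+ 2 = lam i `^ (- kappa) * c i ^+ 2 * lam i `^ (- a).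
  rewrite mulrAC -powRD; last by apply/implyP => _; exact: lt0r_neq0.
  by congr (_ `^ _ * _); rewrite /a; ring.
have xl : gamma * lam i <= lam i by nra.
apply: le_trans (ler_wpM2l w0 (powRN_le_window_sum x_range xl a_gt0)) _.
rewrite mulr_sumr (eq_bigr (term^~ i)) => [|n _]; last by rewrite /term /C; ring.
apply: ler_sum_nat_widen => //; exact: window_start_ge1.
Qed.

Lemma finite_weighted_sum_le (s : seq I) M :
  (forall n, (0 < n)%N -> \sum_(i <- s)
     lam i `^ (- kappa) * ((1 - gamma * lam i) ^+ n * c i) ^+ 2
     <= (n%:R `^ a * t n)^-1) ->
  (forall N, \sum_(1 <= n < N) (n%:R * t n)^-1 <= M) ->
  \sum_(i <- s) lam i `^ (- beta) * c i ^+ 2 <= C * M.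
Proof.
move=> hT hM; set N := (\max_(i <- s) (window i).*2)%N.
apply: (@le_trans _ _ (\sum_(i <- s) \sum_(1 <= n < N.+1) term n i)).
  rewrite big_seq [leRHS]big_seq; apply: ler_sum => i si.
  apply: coord_le_iterate_sum.
  exact: (@leq_bigmax_seq _ _ _ (fun j => (window j).*2)).
rewrite exchange_big /=; apply: le_trans (ler_wpM2l C_ge0 (hM N.+1)).
rewrite mulr_sumr; apply: ler_sum_nat => n /andP[n1 _].
have n0 : 0 < n%:R :> R by rewrite ltr0n.
have tn0 := t_gt0 n1.
rewrite /term -mulr_sumr; apply: le_trans (ler_wpM2l _ (hT n n1)) _.
  by rewrite mulr_ge0 ?divr_ge0 ?powR_ge0 ?ler0n.
rewrite [leLHS](_ : _ = C * (n%:R * t n)^-1) //.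
by field; rewrite !gt_eqF ?powR_gt0.
Qed.

Lemma esum_weights_lt_pinfty :
  (\sum_(1 <= n <oo) ((n%:R * t n)^-1)%:E < +oo)%E ->
  (forall n, (0 < n)%N -> (\esum_(i in [set: I])
     (lam i `^ (- kappa) * ((1 - gamma * lam i) ^+ n * c i) ^+ 2)%:E
     <= ((n%:R `^ a * t n)^-1)%:E)%E) ->
  (\esum_(i in [set: I]) (lam i `^ (- beta) * c i ^+ 2)%:E < +oo)%E.
Proof.
move=> hsum hT.
have u0 n : (1 <= n)%N -> 0 <= (n%:R * t n)^-1.
  by move=> n1; rewrite invr_ge0 mulr_ge0 ?ler0n ?ltW ?t_gt0.
have partial := sum_le_fine_nneseries u0 hsum.
apply: le_lt_trans (ltry (C * fine (\sum_(1 <= n <oo) ((n%:R * t n)^-1)%:E))).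
apply: ge_ereal_sup => _ [X [finX _] <-].
rewrite fsumEFin // lee_fin fsbig_finite //=; apply: finite_weighted_sum_le => [n n1|].
  rewrite -lee_fin -sumEFin; apply: le_trans (hT n n1); apply: esum_ge.
  by exists X => //; rewrite fsbig_finite.
exact: partial.
Qed.

End spectral_weights.

Section inner_product.
Variables (R : realType) (H : normedModType R) (ip : H -> H -> R).
Hypothesis ipP : is_inner_product ip.

Lemma ip0l w : ip 0 w = 0.
Proof.
case: ipP => _ iplin _; have := iplin 1 0 0 w.
by rewrite scaler0 addr0 mul1r => h; lra.
Qed.

Lemma ipZl a u w : ip (a *: u) w = a * ip u w.
Proof. by case: ipP => _ iplin _; have := iplin a u 0 w; rewrite !addr0 ip0l addr0. Qed.

Lemma ipBl u v w : ip (u - v) w = ip u w - ip v w.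
Proof.
case: ipP => _ iplin _; have := iplin (-1) v u w.
by rewrite scaleN1r mulN1r => h; rewrite addrC h addrC.
Qed.

Lemma ip_eigen_coord (S : H -> H) e lam :
  (forall u v, ip (S u) v = ip (S v) u) -> S e = lam *: e ->
  forall v, ip (S v) e = lam * ip v e.
Proof. by case: ipP => ipsym _ _ Ssym Se v; rewrite Ssym Se ipZl ipsym. Qed.

Lemma ip_iter_coord (T : H -> H) e r :
  (forall v, ip (T v) e = r * ip v e) ->
  forall n v, ip (iter n T v) e = r ^+ n * ip v e.
Proof. by move=> Te; elim=> [|n IHn] v /=; rewrite ?mul1r // Te IHn exprS mulrA. Qed.

Lemma second_moment_op_sym d (Omega : measurableType d)
    (P : probability Omega R) (x : Omega -> H) (S : H -> H) :
  is_second_moment_op ip P x S -> forall u v, ip (S u) v = ip (S v) u.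
Proof.
move=> hS u v; apply/EFin_inj; rewrite -hS -hS.
by congr integral; apply/funext => w; rewrite mulrC.
Qed.

End inner_product.

Theorem proposition3 (R : realType) (H : completeNormedModType R)
  (ip : H -> H -> R) (d : measure_display) (Omega : measurableType d)
  (P : probability Omega R) (x : Omega -> H) (S : H -> H)
  (I : choiceType) (e : I -> H) (lam : I -> R)
  (gamma : R) (t : nat -> R) (theta : H) (kappa beta : R) :
  is_inner_product ip ->
  random_vector ip x ->
  (\int[P]_w ((`|x w| ^+ 2)%:E) < +oo)%E ->
  is_second_moment_op ip P x S ->
  is_ONB ip e ->
  (forall i, S (e i) = lam i *: e i) ->
  (forall i, 0 < lam i < 2^-1) ->
  0 < gamma < 1 ->
  (forall n, (0 < n)%N -> 0 < t n) ->
  (\sum_(1 <= n <oo) ((n%:R * t n)^-1)%:E < +oo)%E ->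
  0 <= kappa -> kappa < beta ->
  (forall n, (0 < n)%N ->
     (wnorm2 ip e lam kappa (iter n (fun v : H => (v - gamma *: S v)%R) theta)
      <= ((n%:R `^ (beta - kappa) * t n)^-1)%:E)%E) ->
  (wnorm2 ip e lam beta theta < +oo)%E.
Proof.
move=> ipP _ _ hS _ hSe hlam hgamma ht hsum _ kb hT.
have S_coord i := ip_eigen_coord ipP (second_moment_op_sym hS) (hSe i).
have iter_coord n i :
    ip (iter n (fun v => v - gamma *: S v) theta) (e i) =
    (1 - gamma * lam i) ^+ n * ip theta (e i).
  by apply: ip_iter_coord => v; rewrite (ipBl ipP) (ipZl ipP) S_coord; ring.
apply: (esum_weights_lt_pinfty (c := fun i => ip theta (e i)) hlam hgamma kb ht hsum).
move=> n n1.
under eq_esum => i _ do rewrite -iter_coord.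
exact: hT.
Qed.
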